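(* Let $n\ge2$, $\alpha_2,\dots,\alpha_n\in\mathbb C$, and $T=I+\alpha_2D^2+\cdots+\alpha_nD^n\in\mathcal L(\mathcal P_n)$. Then for every $\varepsilon>0$ there exists $C_T(\varepsilon)>0$ such that for every $f\in\mathcal P_n$ of degree at least $2$ with simple roots, $$\tau(f)>C_T(\varepsilon)\ \Longrightarrow\ d_F\bigl(Z(f),Z(Tf)\bigr)<\varepsilon.$$
   Context: $\mathcal P_n$ is the complex vector space of polynomials of degree at most $n$, $D$ differentiation, $I$ identity. $Z(f)$ denotes the roots of $f$ counted with multiplicity (a multiset of size $\deg f$); $\deg Tf=\deg f$ for such $T$. For $f$ of degree $\ge2$ with at least two distinct roots, $\tau(f):=\min\{|w-v|:w\in Z(f),\ v\in Z(f')\setminus\{w\}\}$. For multisets $A=\{u_1,\dots,u_m\}$, $B=\{v_1,\dots,v_m\}$ in $\mathbb C$, $d_F(A,B)=\min_{\sigma}\max_{k}|u_k-v_{\sigma(k)}|$ over permutations $\sigma$ of $\{1,\dots,m\}$. *)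

From HB Require Import structures.
From mathcomp Require Import all_boot all_order all_algebra all_fingroup.
Set Implicit Arguments. Unset Strict Implicit. Unset Printing Implicit Defensive.
Import Order.TTheory GRing.Theory Num.Theory.
Local Open Scope ring_scope.

Section Defs.
Variable K : numClosedFieldType.

(* Z(f): the roots of f listed with multiplicity (a sequence r with
   f = lead_coef f *: \prod_(z <- r) ('X - z), of size deg f).  The order of
   the listing is irrelevant for everything below (dF minimises over all
   permutations, tau takes a minimum over all pairs). *)
Definition Z (f : {poly K}) : seq K := sval (closed_field_poly_normal f).

Definition minseq (s : seq K) : K := foldr Num.min (head 0 s) s.

Definition tau (f : {poly K}) : K :=
  minseq [seq `|w - v| | w <- Z f, v <- [seq v <- Z f^`() | v != w]].

(* matching distance d_F(A,B) = min_sigma max_k |u_k - v_sigma(k)|,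
   for A, B of the same size m (indices beyond size give default 0). *)
Definition dF (A B : seq K) : K :=
  let m := size A in
  minseq [seq \big[Num.max/0]_(k < m) `|A`_k - B`_(nat_of_ord (s k))| | s : {perm 'I_m} <- enum [set: {perm 'I_m}]].

Definition Top (n : nat) (alpha : nat -> K) (f : {poly K}) : {poly K} :=
  f + \sum_(2 <= k < n.+1) alpha k *: f^`(k).

End Defs.

From HB Require Import structures.
From mathcomp Require Import all_boot all_order all_algebra all_fingroup.
From mathcomp Require Import ring.
Set Implicit Arguments. Unset Strict Implicit. Unset Printing Implicit Defensive.
Import Order.TTheory GRing.Theory Num.Theory.
Local Open Scope ring_scope.

(* The single analytic tool is an estimate for a polynomial p of degree at
   most n and a point w at distance >= t from all roots of p:
        t^r |p^[r](w)| <= 2^n |p(w)|                      ([nderivn_bound])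
   where p^[r] = p^(r)/r! is the Hasse derivative; it is proved for
   products of linear factors by induction, using the Leibniz rule.
   Let w be a simple root of f, at distance >= t = tau(f) from Z(f').
   - Applied to p = f', the estimate shows that T f(w) and (T f)'(w) - f'(w)
     are O(|f'(w)| / t); applied to p = T f it shows that if T f had no root
     within eps of w, then eps |(T f)'(w)| <= 2^n |T f(w)|.  Both together
     force t = O(1/eps): [root_stability], [root_moves_little].
   - A Taylor expansion of f at w, with the same estimate for p = f', shows
     that another root w' of f within distance t satisfies
     t <= n 2^n |w' - w|: [root_separation], [roots_stay_apart].
   Hence for tau(f) large, every root of f has a root of T f within eps and
   the roots of f are 2 eps-separated; the "nearest root" map is then a
   bijection realising d_F < eps ([dF_lt]). *)

Section HasseDerivativeBounds.
Variable R : numDomainType.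
Implicit Types (p : {poly R}) (s : seq R) (w t : R).

Definition far_from s w t : bool := all (fun v => t <= `|w - v|) s.

Lemma horner_nderivn_mulXsubC p c r w :
  (p * ('X - c%:P))^`N(r.+1).[w] = p^`N(r).[w] + p^`N(r.+1).[w] * (w - c).
Proof.
have -> : p * ('X - c%:P) = p * 'X + 0%:P - c *: p.
  by rewrite polyC0 addr0 mulrBr -mul_polyC [c%:P * p]mulrC.
rewrite nderivnB nderivnMXaddC nderivnZ hornerD hornerN hornerZ hornerD.
by rewrite hornerMX mulrBr addrA [c * _]mulrC.
Qed.

Lemma horner_nderivn_deriv p i w :
  (p^`())^`N(i).[w] = p^`N(i.+1).[w] *+ i.+1.
Proof.
have := congr1 (horner^~ w) (nderivn_def i.+1 p).
rewrite derivSn nderivn_def !hornerMn factS mulrnA.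
exact/pmulrnI/fact_gt0.
Qed.

Lemma nderivn_prod_XsubC_bound s w t r :
  0 <= t -> far_from s w t ->
  t ^+ r * `|(\prod_(v <- s) ('X - v%:P))^`N(r).[w]|
    <= 2 ^+ size s * `|(\prod_(v <- s) ('X - v%:P)).[w]|.
Proof.
move=> t0; elim: s r => [|a s IH] r /=.
  rewrite big_nil; case: r => [|r] _; first by rewrite nderivn0 expr0 !mul1r.
  by rewrite nderivn_poly0 ?size_poly1 // horner0 normr0 mulr0 mulr_ge0 ?exprn_ge0.
case/andP=> ta far_s; rewrite big_cons.
set P := \prod_(v <- s) ('X - v%:P); rewrite [_ * P]mulrC.
have P0 : 0 <= 2 ^+ size s * `|P.[w]| by rewrite mulr_ge0 ?exprn_ge0.
case: r => [|r].
  rewrite expr0 mul1r nderivn0; apply: ler_peMl; first exact: normr_ge0.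
  by rewrite exprn_ege1 // ler1n.
rewrite horner_nderivn_mulXsubC hornerM hornerXsubC !normrM exprS.
apply: (le_trans (ler_wpM2l _ (ler_normD _ _))); first by rewrite mulr_ge0 ?exprn_ge0.
have lower : t * t ^+ r * `|P^`N(r).[w]| <= `|w - a| * (2 ^+ size s * `|P.[w]|).
  by rewrite -mulrA; apply: ler_pM; rewrite ?mulr_ge0 ?exprn_ge0 ?IH.
have higher : t * t ^+ r * `|P^`N(r.+1).[w] * (w - a)|
    <= 2 ^+ size s * `|P.[w]| * `|w - a|.
  by rewrite normrM mulrA -exprS ler_wpM2r ?IH.
rewrite mulrDr; apply: (le_trans (lerD lower higher)).
suff -> : 2 ^+ (size s).+1 * (`|P.[w]| * `|w - a|)
    = `|w - a| * (2 ^+ size s * `|P.[w]|) + 2 ^+ size s * `|P.[w]| * `|w - a| by [].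
by rewrite exprS; ring.
Qed.

End HasseDerivativeBounds.

Section RootsAndDerivatives.
Variable K : numClosedFieldType.
Implicit Types (p : {poly K}) (w t : K).

Lemma Z_factor p : p = lead_coef p *: \prod_(z <- Z p) ('X - z%:P).
Proof. by rewrite /Z; case: (closed_field_poly_normal p). Qed.

Lemma size_Z p : p != 0 -> size (Z p) = (size p).-1.
Proof.
move=> p0; rewrite [in RHS](Z_factor p) size_scale ?lead_coef_eq0 //.
by rewrite size_prod_XsubC.
Qed.

Lemma root_Z p v : v \in Z p -> p.[v] = 0.
Proof.
move=> vZ; rewrite (Z_factor p) hornerZ horner_prod (big_rem v) //=.
by rewrite hornerXsubC subrr mul0r mulr0.
Qed.

Lemma deriv_simple_root p w :
  p != 0 -> uniq (Z p) -> w \in Z p -> p^`().[w] != 0.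
Proof.
move=> p0 uZ wZ; rewrite (Z_factor p) derivZ hornerZ mulf_neq0 ?lead_coef_eq0 //.
rewrite (big_rem w) //= derivM derivXsubC mul1r hornerD hornerM hornerXsubC.
rewrite subrr mul0r addr0 horner_prod prodf_seq_neq0; apply/allP => v vZ /=.
rewrite hornerXsubC subr_eq0; apply: contraL vZ => /eqP <-.
by rewrite mem_rem_uniqF.
Qed.

Lemma nderivn_bound p n w t r :
  (size p <= n.+1)%N -> 0 <= t -> far_from (Z p) w t ->
  t ^+ r * `|p^`N(r).[w]| <= 2 ^+ n * `|p.[w]|.
Proof.
move=> sp t0 far; have [->|p0] := eqVneq p 0.
  by rewrite nderivn_poly0 ?size_poly0 // horner0 normr0 !mulr0.
rewrite (Z_factor p) nderivnZ !hornerZ !normrM.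
rewrite mulrCA [X in _ <= X]mulrCA ler_wpM2l //.
apply: le_trans (nderivn_prod_XsubC_bound _ t0 far) _.
rewrite ler_wpM2r // ler_eXn2l // ?ltr1n // size_Z //.
by case: (size p) sp.
Qed.

(* The same estimate for ordinary derivatives, in the weakened form needed for
   the operator T (here t >= 1, so t <= t^j). *)
Lemma derivn_bound p n w t j :
  (size p <= n.+1)%N -> 1 <= t -> far_from (Z p) w t -> (0 < j)%N ->
  t * `|p^`(j).[w]| <= j`!%:R * (2 ^+ n * `|p.[w]|).
Proof.
move=> sp t1 far j0; have t0 : 0 <= t := le_trans ler01 t1.
rewrite nderivn_def hornerMn normrMn mulrnAr mulr_natl lerMn2r; apply/orP; right.
apply: le_trans (nderivn_bound j sp t0 far).
by rewrite ler_wpM2r // -{1}(expr1 t) ler_weXn2l.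
Qed.

(* Proof: Taylor-expand f at w1 and bound
   the Hasse derivatives of order >= 2 through those of f'. *)
Lemma root_separation p n w1 w2 t :
  (size p <= n.+1)%N -> p.[w1] = 0 -> p^`().[w1] != 0 -> p.[w2] = 0 ->
  w2 != w1 -> 0 <= t -> far_from (Z p^`()) w1 t -> `|w2 - w1| <= t ->
  t <= n%:R * 2 ^+ n * `|w2 - w1|.
Proof.
move=> sp pw1 hw1 pw2 w21 t0 far dt.
have p0 : p != 0 by apply: contraNneq hw1 => ->; rewrite deriv0 horner0.
set h := p^`() in hw1 far *; set d := w2 - w1 in dt *; set D := (2 : K) ^+ n.
have H0 : 0 < `|h.[w1]| by rewrite normr_gt0.
have d0 : 0 < `|d| by rewrite normr_gt0 subr_eq0.
have sh : (size h <= n.+1)%N := leq_trans (ltnW (lt_size_deriv p0)) sp.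
have [m sp_m] : exists m, size p = m.+2.
  have h0 : (0 < size h)%N.
    by rewrite size_poly_gt0; apply: contraNneq hw1 => ->; rewrite horner0.
  exists (size p).-2; have := leq_ltn_trans h0 (lt_size_deriv p0).
  by case: (size p) => [|[|k]].
have mn : (m <= n)%N by rewrite -ltnS ltnW // -sp_m.
have taylor : 0 = h.[w1] * d + \sum_(i < m) p^`N(i.+2).[w1] * d ^+ i.+2.
  move: (nderiv_taylor p (mulrC w1 d)); rewrite /d addrC subrK pw2 sp_m.
  by rewrite !big_ord_recl nderivn0 nderivn1 pw1 expr0 mulr1 add0r expr1.
have hd : `|h.[w1]| * `|d| = `|\sum_(i < m) p^`N(i.+2).[w1] * d ^+ i.+2|.
  by move/eqP: taylor; rewrite eq_sym addr_eq0 -normrM => /eqP ->; rewrite normrN.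
have term i : t * `|p^`N(i.+2).[w1] * d ^+ i.+2| <= D * `|h.[w1]| * `|d| ^+ 2.
  have hasse : `|p^`N(i.+2).[w1]| <= `|h^`N(i.+1).[w1]|.
    by rewrite horner_nderivn_deriv normrMn -mulr_natr ler_peMr // ler1n.
  have dti : `|d| ^+ i <= t ^+ i by rewrite lerXn2r // nnegrE.
  rewrite normrM normrX.
  apply: le_trans (_ : t * `|d| ^+ i * `|h^`N(i.+1).[w1]| * `|d| ^+ 2 <= _).
    suff -> : t * `|d| ^+ i * `|h^`N(i.+1).[w1]| * `|d| ^+ 2
        = t * (`|h^`N(i.+1).[w1]| * `|d| ^+ i.+2).
      by apply: ler_wpM2l => //; apply: ler_wpM2r; rewrite ?exprn_ge0.
    by rewrite -(addn2 i) exprD; ring.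
  rewrite ler_wpM2r ?exprn_ge0 //; apply: le_trans (nderivn_bound i.+1 sh t0 far).
  by rewrite exprS ler_wpM2r // ler_wpM2l.
have : t * (`|h.[w1]| * `|d|) <= n%:R * D * `|d| * (`|h.[w1]| * `|d|).
  rewrite {1}hd; apply: le_trans (ler_wpM2l t0 (ler_norm_sum _ _ _)) _.
  rewrite mulr_sumr (le_trans (ler_sum _ (fun (i : 'I_m) _ => term i))) //.
  rewrite sumr_const card_ord -[_ *+ m]mulr_natl.
  suff -> : n%:R * D * `|d| * (`|h.[w1]| * `|d|) = n%:R * (D * `|h.[w1]| * `|d| ^+ 2).
    by rewrite ler_wpM2r ?ler_nat // !mulr_ge0 ?exprn_ge0.
  by ring.
by rewrite ler_pM2r // mulr_gt0.
Qed.

Lemma roots_stay_apart p n w1 w2 t eps :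
  (size p <= n.+1)%N -> p.[w1] = 0 -> p^`().[w1] != 0 -> p.[w2] = 0 ->
  w2 != w1 -> far_from (Z p^`()) w1 t -> 0 < eps ->
  2 * eps < t -> n%:R * 2 ^+ n * (2 * eps) < t -> 2 * eps <= `|w2 - w1|.
Proof.
move=> sp pw1 hw1 pw2 w21 far e0 epst sept.
have eps2 : 0 < 2 * eps by rewrite mulr_gt0 ?ltr0n.
rewrite real_leNgt ?normr_real ?gtr0_real //; apply/negP => close.
have t0 : 0 <= t by rewrite ltW // (lt_trans eps2).
have nD0 : 0 <= n%:R * (2 : K) ^+ n by rewrite mulr_ge0 ?ler0n ?exprn_ge0.
have : n%:R * 2 ^+ n * `|w2 - w1| < t.
  by apply: le_lt_trans sept; rewrite ler_wpM2l // ltW.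
have := root_separation sp pw1 hw1 pw2 w21 t0 far (ltW (lt_trans close epst)).
by move=> /le_lt_trans lt_t /lt_t; rewrite ltxx.
Qed.

End RootsAndDerivatives.

Lemma size_derivn_lt (R : nzSemiRingType) (p : {poly R}) k :
  p != 0 -> (0 < k)%N -> (size p^`(k) < size p)%N.
Proof.
move=> p0; elim: k => // -[_ _|k IH _]; first by rewrite derivn1 lt_size_deriv.
rewrite derivnS; have [->|pk0] := eqVneq p^`(k.+1) 0.
  by rewrite deriv0 size_poly0 size_poly_gt0.
exact: ltn_trans (lt_size_deriv pk0) (IH _).
Qed.

Section OperatorT.
Variables (K : numClosedFieldType) (n : nat) (alpha : nat -> K).
Implicit Types (f : {poly K}) (w t : K).

(* The weight sum_{k=2}^n |alpha_k| k!, which controls the perturbation T - I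
   near a simple root. *)
Definition Tweight : K := \sum_(2 <= k < n.+1) `|alpha k| * k`!%:R.

Lemma Tweight_ge0 : 0 <= Tweight.
Proof. by rewrite sumr_ge0 // => k _; rewrite mulr_ge0 ?ler0n. Qed.

(* T lowers no degree: the terms alpha_k f^(k), k >= 2, have smaller size. *)
Lemma size_Top f : f != 0 -> size (Top n alpha f) = size f.
Proof.
move=> f0; rewrite /Top size_polyDl // big_nat_cond.
elim/big_ind: _ => [|p q sp sq|k /andP [/andP [k2 _] _]].
- by rewrite size_poly0 size_poly_gt0.
- by rewrite (leq_ltn_trans (size_polyD p q)) // gtn_max sp sq.
- rewrite (leq_ltn_trans (size_scale_leq _ _)) //.
  exact: size_derivn_lt (ltnW k2).
Qed.

Lemma horner_Top_root f w :
  f.[w] = 0 -> (Top n alpha f).[w] = \sum_(2 <= k < n.+1) alpha k * f^`(k).[w].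
Proof.
move=> fw; rewrite /Top hornerD fw add0r horner_sum.
by apply: eq_bigr => k _; rewrite hornerZ.
Qed.

Lemma horner_deriv_Top f w :
  (Top n alpha f)^`().[w] - f^`().[w]
    = \sum_(2 <= k < n.+1) alpha k * f^`()^`(k).[w].
Proof.
rewrite /Top derivD hornerD addrC addKr (linear_sum deriv) horner_sum.
by apply: eq_bigr => k _ /=; rewrite derivZ hornerZ -derivnS derivSn.
Qed.

Lemma Tsum_bound (c : nat -> K) t M :
  0 <= t -> (forall k, (2 <= k)%N -> t * `|c k| <= k`!%:R * M) ->
  t * `|\sum_(2 <= k < n.+1) alpha k * c k| <= Tweight * M.
Proof.
move=> t0 ck; rewrite /Tweight mulr_suml.
apply: le_trans (ler_wpM2l t0 (ler_norm_sum _ _ _)) _.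
rewrite mulr_sumr; apply: ler_sum_nat => k /andP [k2 _].
by rewrite normrM mulrCA -mulrA ler_wpM2l // ck.
Qed.

(* Proof: T f(w) and (T f)'(w) - f'(w) are O(|f'(w)|/t) by [derivn_bound],
   while eps |(T f)'(w)| <= 2^n |T f(w)| by [nderivn_bound]. *)
Lemma root_stability f w t eps :
  (size f <= n.+1)%N -> f.[w] = 0 -> f^`().[w] != 0 ->
  1 <= t -> far_from (Z f^`()) w t ->
  0 <= eps -> far_from (Z (Top n alpha f)) w eps ->
  eps * t <= Tweight * 2 ^+ n * (2 ^+ n + eps).
Proof.
move=> sf fw hw t1 farh e0 farg.
have f0 : f != 0 by apply: contraNneq hw => ->; rewrite deriv0 horner0.
have sg : (size (Top n alpha f) <= n.+1)%N by rewrite size_Top.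
set h := f^`() in hw farh *; set g := Top n alpha f in farg sg *.
set D := (2 : K) ^+ n; set H : K := `|h.[w]|.
have t0 : 0 <= t := le_trans ler01 t1.
have H0 : 0 < H by rewrite normr_gt0.
have sh : (size h <= n.+1)%N := leq_trans (ltnW (lt_size_deriv f0)) sf.
have hbound j : (0 < j)%N -> t * `|h^`(j).[w]| <= j`!%:R * (D * H).
  exact: derivn_bound.
have gw : t * `|g.[w]| <= Tweight * (D * H).
  rewrite horner_Top_root //; apply: Tsum_bound => // -[|k] // k1.
  rewrite derivSn; apply: le_trans (hbound k k1) _.
  apply: ler_wpM2r; first by rewrite mulr_ge0 ?exprn_ge0 ?ltW.
  by rewrite ler_nat leq_fact.
have gdw : t * `|g^`().[w] - h.[w]| <= Tweight * (D * H).
  by rewrite horner_deriv_Top; apply: Tsum_bound => // k k2; rewrite hbound // ltnW.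
have g1 : eps * `|g^`().[w]| <= D * `|g.[w]|.
  by have := nderivn_bound 1 sg e0 farg; rewrite expr1 nderivn1.
have tri : H <= `|g^`().[w]| + `|g^`().[w] - h.[w]|.
  by have := ler_normB (g^`().[w]) (g^`().[w] - h.[w]); rewrite opprB addrC subrK.
have : eps * t * H <= Tweight * D * (D + eps) * H.
  apply: le_trans (ler_wpM2l (mulr_ge0 e0 t0) tri) _; rewrite mulrDr.
  have e1 : eps * t * `|g^`().[w]| <= D * (Tweight * (D * H)).
    rewrite [eps * t]mulrC -mulrA; apply: le_trans (ler_wpM2l t0 g1) _.
    by rewrite mulrCA; apply: ler_wpM2l; rewrite ?exprn_ge0.
  have e2 : eps * t * `|g^`().[w] - h.[w]| <= eps * (Tweight * (D * H)).
    by rewrite -[eps * t * _]mulrA ler_wpM2l.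
  apply: le_trans (lerD e1 e2) _.
  suff -> : Tweight * D * (D + eps) * H
      = D * (Tweight * (D * H)) + eps * (Tweight * (D * H)) by [].
  by ring.
by rewrite ler_pM2r.
Qed.

(* The threshold on t beyond which [root_stability] forces a root of T f
   within eps of w. *)
Definition stab_threshold (eps : K) : K := Tweight * 2 ^+ n * (2 ^+ n + eps) / eps.

Lemma root_moves_little f w t eps :
  (size f <= n.+1)%N -> f.[w] = 0 -> f^`().[w] != 0 ->
  1 <= t -> far_from (Z f^`()) w t -> 0 < eps -> stab_threshold eps < t ->
  exists2 u, u \in Z (Top n alpha f) & `|w - u| < eps.
Proof.
move=> sf fw hw t1 far e0 stab.
case: (boolP (far_from (Z (Top n alpha f)) w eps)) => [farg|].
  have := root_stability sf fw hw t1 far (ltW e0) farg.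
  rewrite -(ltr_pM2l e0) /stab_threshold mulrC divfK ?gt_eqF // in stab.
  by move/(lt_le_trans stab); rewrite ltxx.
by case/allPn => u uZ; rewrite -real_ltNge ?normr_real ?gtr0_real //; exists u.
Qed.

Lemma stab_threshold_ge0 eps : 0 <= eps -> 0 <= stab_threshold eps.
Proof.
move=> e0; have D0 : 0 <= (2 : K) ^+ n by rewrite exprn_ge0.
exact: divr_ge0 (mulr_ge0 (mulr_ge0 Tweight_ge0 D0) (addr_ge0 D0 e0)) e0.
Qed.

End OperatorT.

Section TauAndMatching.
Variable K : numClosedFieldType.

Lemma minseq_le (s : seq K) x :
  {subset s <= Num.real} -> x \in s -> minseq s <= x.
Proof.
move=> sR xs; rewrite /minseq foldrE.
have : head 0 s \is Num.real by case: s sR {xs} => //= y s sR; rewrite sR ?mem_head.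
move: (head 0 s) => a aR; elim: s sR xs => // y s IH sR.
have yR : y \is Num.real by rewrite sR ?mem_head.
have sR' : {subset s <= Num.real} by move=> z zs; rewrite sR // inE zs orbT.
have bR : \big[Num.min/a]_(z <- s) z \is Num.real by rewrite big_seq bigmin_real.
rewrite big_cons inE comparable_ge_min ?real_comparable //.
by case/predU1P => [->|xs]; rewrite ?lexx // (IH sR' xs) orbT.
Qed.

Lemma tau_far (f : {poly K}) w :
  f != 0 -> uniq (Z f) -> w \in Z f -> far_from (Z f^`()) w (tau f).
Proof.
move=> f0 uZ wZ; apply/allP => v vZ.
have vw : v != w.
  apply: contraNneq (deriv_simple_root f0 uZ wZ) => <-; exact/eqP/root_Z.
apply: minseq_le; first by move=> _ /allpairsPdep [a [b [_ _ ->]]]; exact: normr_real.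
by apply: (allpairs_f_dep (fun w v => `|w - v|) wZ); rewrite mem_filter vw.
Qed.

(* Matching lemma: if every point of s (simple, pairwise 2 eps-separated)
   has a point of s' within eps, and |s| = |s'|, then d_F(s, s') < eps; the
   "nearest point" map is injective, hence a permutation of the indices. *)
Lemma dF_lt (s s' : seq K) (eps : K) :
  0 < eps -> size s' = size s -> uniq s ->
  (forall w, w \in s -> exists2 u, u \in s' & `|w - u| < eps) ->
  (forall w1 w2, w1 \in s -> w2 \in s -> w1 != w2 -> 2 * eps <= `|w2 - w1|) ->
  dF s s' < eps.
Proof.
move=> e0 ss us near sep; rewrite /dF; set m := size s.
have close (i : 'I_m) : exists j : 'I_m, `|s`_i - s'`_j| < eps.
  have [u us' uw] := near _ (mem_nth 0 (ltn_ord i)).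
  have jm : (index u s' < m)%N by rewrite /m -ss index_mem.
  by exists (Ordinal jm); rewrite /= nth_index.
pose match_of (i : 'I_m) := odflt i [pick j : 'I_m | `|s`_i - s'`_j| < eps].
have match_ofP (i : 'I_m) : `|s`_i - s'`_(match_of i)| < eps.
  rewrite /match_of; case: pickP => [j //|none].
  by have [j] := close i; rewrite none.
have match_inj : injective match_of.
  move=> i1 i2 e; apply/val_inj/eqP.
  rewrite -(nth_uniq 0 (ltn_ord i1) (ltn_ord i2) us); apply: contraT => ne.
  have near2 : `|s`_i2 - s`_i1| < 2 * eps.
    have -> : s`_i2 - s`_i1
        = (s`_i2 - s'`_(match_of i1)) - (s`_i1 - s'`_(match_of i1)).
      by rewrite opprB addrA subrK.
    apply: le_lt_trans (ler_normB _ _) _.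
    by rewrite mulr2n mulrDl mul1r ltrD // e match_ofP.
  have := sep _ _ (mem_nth 0 (ltn_ord i1)) (mem_nth 0 (ltn_ord i2)) ne.
  by move/(lt_le_trans near2); rewrite ltxx.
apply: le_lt_trans (_ : \big[Num.max/0]_(k < m) `|s`_k - s'`_(perm match_inj k)| < eps).
  apply: minseq_le; last first.
    by apply: map_f; rewrite mem_enum in_setT.
  by move=> _ /mapP [p _ ->]; rewrite bigmax_real // => k _; exact: normr_real.
elim/big_ind: _ => // [x y xe ye|k _]; first by rewrite /Order.max; case: ifP.
by rewrite permE.
Qed.

End TauAndMatching.

Lemma upper_bound (R : numDomainType) (s : seq R) :
  {in s, forall y, 0 <= y} -> exists2 C, 0 < C & {in s, forall x, x <= C}.
Proof.
move=> s0; have sum0 : 0 <= \sum_(y <- s) y by rewrite big_seq sumr_ge0.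
exists (1 + \sum_(y <- s) y); first by rewrite ltr_pwDl.
move=> x xs; rewrite (big_rem x) //= addrCA lerDl addr_ge0 ?ler01 //.
by rewrite big_seq sumr_ge0 // => y /mem_rem; exact: s0.
Qed.

Theorem theorem4p2 (K : numClosedFieldType) (n : nat) (alpha : nat -> K) :
  (2 <= n)%N ->
  forall eps : K, 0 < eps ->
  exists CT : K, 0 < CT /\
    forall f : {poly K},
      (size f <= n.+1)%N -> (2 < size f)%N -> uniq (Z f) ->
      CT < tau f -> dF (Z f) (Z (Top n alpha f)) < eps.
Proof.
move=> n2 eps e0.
set thresholds := [:: 1; 2 * eps; stab_threshold n alpha eps; n%:R * 2 ^+ n * (2 * eps)].
have [CT CT0 CT_ge] : exists2 CT : K, 0 < CT & {in thresholds, forall c, c <= CT}.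
  apply: upper_bound => c; rewrite !inE => /or4P [] /eqP -> //.
  - by rewrite mulr_ge0 ?ltW.
  - by rewrite stab_threshold_ge0 ?ltW.
  - by rewrite !mulr_ge0 ?ler0n ?exprn_ge0 ?ltW.
exists CT; split => // f sf s2 uf tf.
have below c : c \in thresholds -> c < tau f by move/CT_ge/le_lt_trans; apply.
have f0 : f != 0 by rewrite -size_poly_gt0 (ltn_trans _ s2).
have far w : w \in Z f -> far_from (Z f^`()) w (tau f) := tau_far f0 uf.
apply: dF_lt => //.
- by rewrite !size_Z ?size_Top // -size_poly_gt0 size_Top // size_poly_gt0.
- move=> w wZ; have t1 : 1 <= tau f by rewrite ltW ?below ?mem_head.
  apply: root_moves_little sf (root_Z wZ) (deriv_simple_root f0 uf wZ) t1 (far w wZ) e0 _.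
  by rewrite below // !inE eqxx !orbT.
- move=> w1 w2 w1Z w2Z ne.
  apply: roots_stay_apart sf (root_Z w1Z) (deriv_simple_root f0 uf w1Z) (root_Z w2Z) _
    (far w1 w1Z) e0 _ _; first by rewrite eq_sym.
  all: by rewrite below // !inE eqxx ?orbT.
Qed.
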